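(* Assume the Standing Hypothesis (S). Then $G_v\cap L$ is not isomorphic to $\mathrm{C}_{q+\sqrt{2q}+1}:4$ nor to $\mathrm{C}_{q-\sqrt{2q}+1}:4$ (the maximal subgroups of $L$ that are semidirect products of a cyclic group of order $q\pm\sqrt{2q}+1$ by a cyclic group of order $4$).
   Context: Standing Hypothesis (S): $n\geq 1$, $q=2^{2n+1}$, $L=\mathrm{Sz}(q)$ (the Suzuki group), $G=L:m$ with $m$ a divisor of $2n+1$ (extension by field automorphisms, so $L\leq G\leq\mathrm{Aut}(L)=L:(2n+1)$). $\Gamma$ is a finite digraph with at least one arc, $G\leq\mathrm{Aut}(\Gamma)$ acts primitively on the vertices and transitively on the $s$-arcs of $\Gamma$ for some $s\geq 2$, and $v$ is a vertex with stabiliser $G_v$ (a maximal subgroup of $G$ not containing $L$). A digraph is a finite set with an anti-symmetric irreflexive relation $\to$; an $s$-arc is a sequence $v_0,\dots,v_s$ with $v_i\to v_{i+1}$. $\mathrm{C}_k$ is the cyclic group of order $k$. *)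

From mathcomp Require Import all_boot all_algebra all_fingroup all_solvable all_field.
Set Implicit Arguments.
Unset Strict Implicit.
Unset Printing Implicit Defensive.
Import GRing.Theory.

(* ---------- The Suzuki group Sz(q), q = 2^(2n+1), as a group of 4x4 matrices
   over a finite field F with #|F| = q (Wilson, "The Finite Simple Groups",
   Sect. 4.2).  theta : x |-> x^(2^(n+1)) is the field automorphism with
   theta^2 = Frobenius. ---------- *)
Section Suzuki.
Variables (F : finFieldType) (n : nat).
Local Open Scope ring_scope.

Definition sz_theta (x : F) : F := x ^+ (2 ^ n.+1).

Definition sz_S (a b : F) : 'M[F]_4 :=
  \matrix_(i < 4, j < 4)
    match nat_of_ord i, nat_of_ord j with
    | 0, 0 => 1 | 1, 1 => 1 | 2, 2 => 1 | 3, 3 => 1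
    | 1, 0 => a
    | 2, 0 => b
    | 2, 1 => sz_theta a
    | 3, 0 => a ^+ 2 * sz_theta a + a * b + sz_theta b
    | 3, 1 => a * sz_theta a + b
    | 3, 2 => a
    | _, _ => 0
    end.

Definition sz_D (l : F) : 'M[F]_4 :=
  \matrix_(i < 4, j < 4)
    if i == j then
      match nat_of_ord i with
      | 0 => l ^+ (1 + 2 ^ n)
      | 1 => l ^+ (2 ^ n)
      | 2 => (l ^+ (2 ^ n))^-1
      | _ => (l ^+ (1 + 2 ^ n))^-1
      end
    else 0.

Definition sz_W : 'M[F]_4 :=
  \matrix_(i < 4, j < 4) if (i + j == 3)%N then 1 else 0.

Definition sz_gen (M : 'M[F]_4) : bool :=
  [|| [exists a, exists b, M == sz_S a b],
      [exists l : F, (l != 0) && (M == sz_D l)] | M == sz_W].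

Definition SzSet : {set {'GL_4[F]}} := [set u : {'GL_4[F]} | sz_gen (GLval u)].

Definition Suzuki : {group {'GL_4[F]}} := <<SzSet>>%G.
End Suzuki.

Section Digraph.
Variable V : finType.

Definition is_digraph (arc : rel V) : Prop :=
  (forall x, ~~ arc x x) /\ (forall x y, arc x y -> ~~ arc y x).

Definition is_sarc (arc : rel V) (s : nat) (p : seq V) : bool :=
  (size p == s.+1) && (if p is x :: p' then path arc x p' else false).
End Digraph.

Local Open Scope group_scope.

Definition acts_as_automorphisms (gT : finGroupType) (V : finType)
  (A : {set gT}) (to : {action gT &-> V}) (arc : rel V) : Prop :=
  [faithful A, on [set: V] | to] /\
  (forall g, g \in A -> forall x y, arc (to x g) (to y g) = arc x y).

Definition sarc_transitive (gT : finGroupType) (V : finType)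
  (A : {set gT}) (to : {action gT &-> V}) (arc : rel V) (s : nat) : Prop :=
  forall p p' : seq V, is_sarc arc s p -> is_sarc arc s p' ->
    exists2 g, g \in A & map (fun x => to x g) p = p'.

(* H is isomorphic to C_k : 4, the semidirect product of a cyclic group of
   order k by a cyclic group of order 4 acting by x |-> x^q (the structure of
   the maximal subgroups C_{q +- sqrt(2q) + 1} : 4 of Sz(q)). *)
Definition is_Ck_rtimes_4 (gT : finGroupType) (H : {set gT}) (k q : nat) : Prop :=
  exists (K : {group gT}) (y : gT),
    [/\ cyclic K, #|K| = k, #[y] = 4%N, K ><| <[y]> = H &
        forall x, x \in K -> x ^ y = x ^+ q].

From mathcomp Require Import all_boot all_algebra all_fingroup all_solvable all_field.
From mathcomp Require Import ring zify.
Set Implicit Arguments.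
Unset Strict Implicit.
Unset Printing Implicit Defensive.
Local Open Scope group_scope.

(* Let X = G_v, N = X cap L and suppose N = K : C_4 with K cyclic of odd order
   k > |G : L|.  Then K is the normal Hall 2'-subgroup of N, hence normal in X.
   Take a 2-arc u -> v -> w and g in G mapping (u,v) to (v,w), so that
   A := G_uv is conjugate by g to B := G_vw, and X = B A by 2-arc transitivity.
   The group A cap K is normal in X (K is cyclic) and normalised by g (its
   g-conjugate is a 2'-subgroup of N of the same order); since X is maximal in
   the primitive group G, A cap K is normal in G, hence trivial.  Counting in
   X = B A then gives k^2 | |X| = 4k |X : L|, so k divides |X : L|, which
   divides |G : L|: a contradiction with k > |G : L|. *)

Lemma dvdn_square_of_product (a x t k : nat) :
  (0 < x)%N -> (a * a = x * t)%N -> (a * k %| x)%N -> (k * k %| x)%N.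
Proof.
move=> x_gt0 def_aa akx.
have : (x * (t * (k * k)) %| x * x)%N.
  by rewrite mulnA -def_aa (_ : a * a * (k * k) = a * k * (a * k))%N ?dvdn_mul //; ring.
rewrite dvdn_pmul2l // => /(dvdn_trans _); apply; exact: dvdn_mull.
Qed.

Lemma odd_dvdn_cofactor (k m : nat) : odd k -> (k * k %| k * 4 * m)%N -> (k %| m)%N.
Proof.
move=> odd_k; have k_gt0 : (0 < k)%N by case: k odd_k.
rewrite -mulnA dvdn_pmul2l // Gauss_dvdr //.
by rewrite (_ : 4 = 2 ^ 2)%N // coprimeXr // coprimen2.
Qed.

Lemma suzuki_Ck_orders (n : nat) : (1 <= n)%N ->
  let k_plus := (2 ^ (2 * n + 1) + 2 ^ n.+1 + 1)%N in
  let k_minus := (2 ^ (2 * n + 1) - 2 ^ n.+1 + 1)%N in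
  [/\ odd k_plus, odd k_minus, (2 * n + 1 < k_plus)%N & (2 * n + 1 < k_minus)%N].
Proof.
move=> n_gt0 /=.
have def_q : (2 ^ (2 * n + 1) = 2 * (2 ^ n * 2 ^ n))%N.
  by rewrite addn1 expnS -expnD addnn -mul2n.
rewrite def_q expnS.
have n_lt := ltn_expl n (isT : (1 < 2)%N).
have a_ge2 : (2 <= 2 ^ n)%N by rewrite -(expn1 2) leq_exp2l.
move: n_lt a_ge2; set a := (2 ^ n)%N => n_lt a_ge2.
rewrite -mulnBr -mulnDr !addn1 /= !oddM /=; split => //; nia.
Qed.

Lemma index_sub_dvdn (gT : finGroupType) (G L X : {group gT}) :
  L <| G -> X \subset G -> (#|X : L| %| #|G : L|)%N.
Proof.
move=> /andP[sLG nLG] sXG.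
rewrite -indexMg -(norm_joinEr (subset_trans sXG nLG)) indexSg ?joing_subl //.
by rewrite join_subG sLG.
Qed.

Lemma TI_card_dvdn (gT : finGroupType) (X Y K : {group gT}) :
  Y \subset X -> K <| X -> Y :&: K = 1 -> (#|Y| * #|K| %| #|X|)%N.
Proof.
move=> sYX /andP[sKX nKX] tiYK.
rewrite -(TI_cardMg tiYK) -(norm_joinEl (subset_trans sYX nKX)) cardSg //.
by rewrite join_subG sYX.
Qed.

(* Counting in a factorisation X = B A with |B| = |A|: if A meets the normal
   subgroup K trivially then |A| |K| divides |X| = |A|^2 / |A cap B|, whence
   |K|^2 divides |X|. *)
Lemma factorisation_sq_card_dvdn (gT : finGroupType) (X A B K : {group gT}) :
  X :=: B * A -> #|B| = #|A| -> A :&: K = 1 -> K <| X -> (#|K| * #|K| %| #|X|)%N.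
Proof.
move=> defX cardB tiAK nsKX.
have sAX : A \subset X by rewrite defX mulG_subr.
have card_AA : (#|A| * #|A| = #|X| * #|B :&: A|)%N by rewrite -{1}cardB mul_cardG defX.
exact: dvdn_square_of_product (cardG_gt0 _) card_AA (TI_card_dvdn sAX nsKX tiAK).
Qed.

Lemma normal_Hall_normal (gT : finGroupType) (pi : nat_pred) (X N K : {group gT}) :
  pi.-Hall(N) K -> K <| N -> N <| X -> K <| X.
Proof.
move=> hallK nsKN nsNX.
by rewrite -(normal_Hall_pcore hallK nsKN) (char_normal_trans (pcore_char _ _)).
Qed.

Lemma cyclic_sub_normal (gT : finGroupType) (X K H : {group gT}) :
  cyclic K -> K <| X -> H \subset K -> X \subset 'N(H).
Proof.
move=> cycK nsKX sHK.
by apply: normal_norm; apply: char_normal_trans nsKX; rewrite sub_cyclic_char.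
Qed.

Lemma Ck_rtimes_4_Hall (gT : finGroupType) (H : {group gT}) (k q : nat) :
  odd k -> is_Ck_rtimes_4 H k q ->
  exists K : {group gT},
    [/\ cyclic K, #|K| = k, #|H| = (k * 4)%N, K <| H & (2^').-Hall(H) K].
Proof.
move=> odd_k [K [y [cycK cardK oy defH _]]].
have [nsKH _ _ _ _] := sdprod_context defH.
have cardH : #|H| = (k * 4)%N by rewrite -(sdprod_card defH) cardK -orderE oy.
exists K; split=> //; rewrite /pHall normal_sub //= /pgroup cardK.
rewrite p'natE // dvdn2 odd_k /= -divgS ?(normal_sub nsKH) // cardH cardK.
by rewrite mulKn ?(odd_gt0 odd_k).
Qed.

Section PointStabilisers.
Variables (gT : finGroupType) (V : finType) (to : {action gT &-> V}) (G : {group gT}).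

Lemma in_stab (H : {set gT}) x z : (z \in 'C_H[x | to]) = (z \in H) && (to x z == x).
Proof. by rewrite inE (sameP astab1P eqP). Qed.

Lemma pair_stab_conj (u v : V) (g : gT) : g \in G ->
  'C_('C_G[v | to])[u | to] :^ g = 'C_('C_G[to v g | to])[to u g | to].
Proof.
by move=> Gg; rewrite conjIg -astab1_act conjIg -astab1_act (conjGid Gg).
Qed.

Hypothesis primG : [primitive G, on [set: V] | to].
Hypothesis faithG : [faithful G, on [set: V] | to].

(* In a faithful primitive group, a subgroup of a point stabiliser G_v that is
   normalised both by G_v and by an element outside G_v is trivial: its
   normaliser properly contains the maximal subgroup G_v, so it is normal in G. *)
Lemma primitive_stab_normalised_trivial (H : {group gT}) (v : V) (g : gT) :
  H \subset 'C_G[v | to] -> 'C_G[v | to] \subset 'N(H) ->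
  g \in 'N_G(H) -> to v g != v -> H :=: 1.
Proof.
move=> sHX nHX NHg moved.
have trG : [transitive G, on [set: V] | to] by case/andP: primG.
have := primG; rewrite (trans_prim_astab (in_setT v) trG) => /maximal_eqP[_ maxX].
have sXN : 'C_G[v | to] \subset 'N_G(H) by rewrite subsetI subsetIl nHX.
have [defN | defN] := maxX _ sXN (subsetIl _ _).
  by move: NHg moved; rewrite defN in_stab => /andP[_ ->].
have nsHG : H <| G by rewrite /normal (subset_trans sHX (subsetIl _ _)) -{1}defN subsetIr.
have [sHC | trH] := prim_trans_norm primG nsHG.
  by apply/trivgP; apply: subset_trans sHC faithG.
have [h Hh vh] := atransP2 trH (in_setT v) (in_setT (to v g)).
by move: moved (subsetP sHX h Hh); rewrite in_stab vh => /negPf->; rewrite andbF.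
Qed.

(* If some g in G moves v and conjugates the stabiliser A = G_uv into G_v, then
   A cap K is trivial: its conjugate by g is again a 2'-subgroup of G_v cap L,
   hence lies in K and, K being cyclic, equals A cap K. *)
Lemma Hall_meets_pair_stab_trivially (L K : {group gT}) (u v : V) (g : gT) :
  L <| G -> cyclic K -> (2^').-Hall('C_G[v | to] :&: L) K ->
  K <| 'C_G[v | to] :&: L -> g \in G -> to v g != v ->
  'C_('C_G[v | to])[u | to] :^ g \subset 'C_G[v | to] ->
  'C_('C_G[v | to])[u | to] :&: K = 1.
Proof.
set X := 'C_G[v | to]; set A := 'C_X[u | to].
move=> nsLG cycK hallK nsKN Gg moved sAgX.
have nsKX : K <| X := normal_Hall_normal hallK nsKN (normalGI (subsetIl _ _) nsLG).
have sAKX : A :&: K \subset X := subset_trans (subsetIl _ _) (subsetIl _ _).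
have sAKgK : (A :&: K)%G :^ g \subset K.
  rewrite (sub_normal_Hall hallK nsKN) ?pgroupJ.
    exact: pgroupS (subsetIr _ _) (pHall_pgroup hallK).
  rewrite subsetI (subset_trans _ sAgX) ?conjSg ?subsetIl //=.
  rewrite -(normP (subsetP (normal_norm nsLG) g Gg)) conjSg.
  exact: subset_trans (subsetIr _ _) (subset_trans (normal_sub nsKN) (subsetIr _ _)).
have nAKg : g \in 'N_G(A :&: K).
  rewrite inE Gg; apply/normP/eqP.
  by rewrite (eq_subG_cyclic cycK sAKgK (subsetIr _ _)) cardJg.
exact: primitive_stab_normalised_trivial sAKX (cyclic_sub_normal cycK nsKX (subsetIr _ _)) nAKg moved.
Qed.
End PointStabilisers.

Section TwoArcs.
Variables (gT : finGroupType) (V : finType) (arc : rel V).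
Variables (to : {action gT &-> V}) (G : {group gT}).

Definition two_arc_transitive : Prop :=
  forall a b c a' b' c', arc a b -> arc b c -> arc a' b' -> arc b' c' ->
  exists2 g, g \in G & [/\ to a g = a', to b g = b' & to c g = c'].

Hypothesis autG : forall g, g \in G -> forall x y, arc (to x g) (to y g) = arc x y.
Hypothesis trG : [transitive G, on [set: V] | to].

Lemma arc_neighbours : (exists x y, arc x y) ->
  forall z, (exists t, arc z t) /\ (exists t, arc t z).
Proof.
move=> [x [y xy]] z; split.
  have [h Gh ->] := atransP2 trG (in_setT x) (in_setT z).
  by exists (to y h); rewrite autG.
have [h Gh ->] := atransP2 trG (in_setT y) (in_setT z).
by exists (to x h); rewrite autG.
Qed.

(* s-arc transitivity for s >= 2 yields 2-arc transitivity, as every 2-arc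
   extends to an s-arc when all vertices have out-neighbours. *)
Lemma sarc_two_arc_transitive (s : nat) : (2 <= s)%N ->
  (forall z, exists t, arc z t) -> sarc_transitive G to arc s -> two_arc_transitive.
Proof.
case: s => [|[|s]] // _ out st a b c a' b' c' ab bc ab' bc'.
pose f z := odflt z [pick t | arc z t].
have arc_f z : arc z (f z).
  by rewrite /f; case: pickP => //= no_t; have [t] := out z; rewrite no_t.
have extend x y z : arc x y -> arc y z ->
    is_sarc arc s.+2 [:: x, y, z & traject f (f z) s].
  move=> xy yz; rewrite /is_sarc /= size_traject eqxx /= xy yz /=.
  by apply: sub_path (fpath_traject f z s) => p p' /= /eqP <-.
have [g Gg [? ? ? _]] := st _ _ (extend _ _ _ ab bc) (extend _ _ _ ab' bc').
by exists g.
Qed.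

(* In a 2-arc transitive digraph, for a 2-arc u -> v -> w the vertex stabiliser
   factorises as G_v = G_vw G_uv: G_uv is transitive on the out-neighbours of v. *)
Lemma stab_factorisation (u v w : V) :
  two_arc_transitive -> arc u v -> arc v w ->
  'C_G[v | to] = 'C_('C_G[v | to])[w | to] * 'C_('C_G[v | to])[u | to].
Proof.
move=> two uv vw; apply/eqP; rewrite eqEsubset mul_subG ?subsetIl // andbT.
apply/subsetP => a; rewrite in_stab => /andP[Ga /eqP va].
have vwa : arc v (to w a) by rewrite -{1}va autG.
have [b Gb [ub vb wb]] := two _ _ _ _ _ _ uv vw uv vwa.
rewrite -(mulgKV b a) mem_mulg //; last by rewrite !in_stab Gb vb ub !eqxx.
by rewrite !in_stab groupM ?groupV //= !actM va -{1}vb -wb !actK !eqxx.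
Qed.
End TwoArcs.

Lemma stabiliser_not_Ck_rtimes_4 (gT : finGroupType) (L G : {group gT})
    (V : finType) (arc : rel V) (to : {action gT &-> V}) (s : nat) (v : V)
    (k r q : nat) :
  L <| G -> (#|G : L| %| r)%N -> (0 < r)%N ->
  is_digraph arc -> (exists x y, arc x y) ->
  acts_as_automorphisms G to arc -> [primitive G, on [set: V] | to] ->
  (2 <= s)%N -> sarc_transitive G to arc s ->
  odd k -> (r < k)%N ->
  ~ is_Ck_rtimes_4 ('C_G[v | to] :&: L) k q.
Proof.
move=> nsLG iGL r_gt0 [irr _] ex [faithG autG] primG s2 sarc odd_k r_lt_k Ck.
have trG : [transitive G, on [set: V] | to] by case/andP: primG.
have nbr := arc_neighbours autG trG ex.
have two := sarc_two_arc_transitive s2 (fun z => (nbr z).1) sarc.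
have [[w vw] [u uv]] := nbr v; have [[t wt] _] := nbr w.
have [g Gg [ug vg _]] := two _ _ _ _ _ _ uv vw vw wt.
set X := 'C_G[v | to]; set A := 'C_X[u | to]; set B := 'C_X[w | to].
have AgB : A :^ g = B by rewrite pair_stab_conj // ug vg; apply: setIAC.
have moved : to v g != v by rewrite vg; apply: contraTneq vw => ->; apply: irr.
have [K [cycK cardK cardN nsKN hallK]] := Ck_rtimes_4_Hall odd_k Ck.
have tiAK : A :&: K = 1.
  apply: (Hall_meets_pair_stab_trivially primG faithG nsLG cycK hallK nsKN Gg moved).
  by rewrite -/X -/A AgB subsetIl.
have nsKX : K <| X := normal_Hall_normal hallK nsKN (normalGI (subsetIl _ _) nsLG).
have defX : X = B * A := stab_factorisation autG two uv vw.
have cardB : #|B| = #|A| by rewrite -AgB cardJg.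
have sq_dvd : (k * k %| #|X|)%N.
  by rewrite -cardK (factorisation_sq_card_dvdn defX cardB tiAK nsKX).
have k_dvd_index : (k %| #|X : L|)%N.
  by apply: odd_dvdn_cofactor odd_k _; rewrite -cardN LagrangeI.
have k_dvd_r := dvdn_trans k_dvd_index (dvdn_trans (index_sub_dvdn nsLG (subsetIl _ _)) iGL).
by move: (dvdn_leq r_gt0 k_dvd_r); rewrite leqNgt r_lt_k.
Qed.

Theorem lemma4p4
  (n : nat) (F : finFieldType) (gT : finGroupType) (L G : {group gT})
  (V : finType) (arc : rel V) (to : {action gT &-> V}) (s : nat) (v : V) :
  (1 <= n)%N ->
  #|F| = (2 ^ (2 * n + 1))%N ->
  (* L = Sz(q), L <= G <= Aut(L), G = L:m with m | 2n+1 *)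
  L \isog Suzuki F n ->
  L <| G ->
  'C_G(L) = 1 ->
  (#|G : L| %| 2 * n + 1)%N ->
  (* Gamma is a digraph with at least one arc *)
  is_digraph arc ->
  (exists x y, arc x y) ->
  (* G <= Aut(Gamma), primitive on vertices, transitive on s-arcs, s >= 2 *)
  acts_as_automorphisms G to arc ->
  [primitive G, on [set: V] | to] ->
  (2 <= s)%N ->
  sarc_transitive G to arc s ->
  ~ is_Ck_rtimes_4 ('C_G[v | to] :&: L) (2 ^ (2 * n + 1) + 2 ^ n.+1 + 1)
                   (2 ^ (2 * n + 1)) /\
  ~ is_Ck_rtimes_4 ('C_G[v | to] :&: L) (2 ^ (2 * n + 1) - 2 ^ n.+1 + 1)
                   (2 ^ (2 * n + 1)).
Proof.
move=> n_gt0 _ _ nsLG _ iGL dg ex aut prim s2 sarc.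
have [odd_plus odd_minus lt_plus lt_minus] := suzuki_Ck_orders n_gt0.
have r_gt0 : (0 < 2 * n + 1)%N by rewrite addn1.
by split; apply: stabiliser_not_Ck_rtimes_4 nsLG iGL r_gt0 dg ex aut prim s2 sarc _ _.
Qed.
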